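(* Let $f:\mathbb P(V_F)\dashrightarrow\mathbb P(V_G)$ be a quadro-quadric Cremona transformation with inverse $g$. Let $E_f\subset R_f$ and $E_g\subset R_g$ be projective subspaces. The following are equivalent: \begin{enumerate} \item $E_f$ and $E_g$ are corresponding radical ideals for $f$ and $g$ respectively; \item $df(E_f)\subset E_g$ and $dg(E_g)\subset E_f$. \end{enumerate}
   Context: $V_F$ and $V_G$ are $n$-dimensional vector spaces. $F:V_F\to V_G$ and $G:V_G\to V_F$ are quadratic lifts of $f$ and $g$, with cubic forms $N,M$ such that $G(F(x))=N(x)x$ and $F(G(y))=M(y)y$. Put $j_f=F/N:V_F\dashrightarrow V_G$ and $j_g=G/M$. The radical of $f$ is $R_f=V(d^2N)\subset\mathbb P(V_F)$, and similarly $R_g=V(d^2M)$. For a projective subspace $A_f$ denote by $A_F$ its affine cone. A pair of projective subspaces $(I_f,I_g)$ is an ideal (and $I_f,I_g$ are called corresponding ideals) if, for generic $x\in V_F$ and $y\in V_G$, \[ j_f(x+I_F)-j_f(x)\subset I_G\quad\text{and}\quad j_g(y+I_G)-j_g(y)\subset I_F. \] It is radical if $I_f\subset R_f$ (equivalently $I_g\subset R_g$). For a projective subspace $E_f\subset\mathbb P(V_F)$, $df(E_f)$ is the projectivization of the span of $\{F(x+e)-F(x)-F(e): x\in V_F,\ e\in E_F\}$ (empty if this is $0$); $dg$ is defined similarly. *)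

From HB Require Import structures.
From mathcomp Require Import all_boot all_order all_algebra.
From mathcomp Require Import mpoly.
Set Implicit Arguments.
Unset Strict Implicit.
Unset Printing Implicit Defensive.
Import Order.TTheory GRing.Theory.
Local Open Scope ring_scope.

Section QuadroQuadric.
Variables (K : fieldType) (n : nat).

(* V_F = V_G = K^n, realised as row vectors 'rV[K]_n. *)
Notation V := 'rV[K]_n.

Definition ev (p : {mpoly K[n]}) (x : V) : K := p.@[fun i => x 0 i].

Definition evmap (F : 'I_n -> {mpoly K[n]}) (x : V) : V :=
  \row_i ev (F i) x.

(* F is a quadratic lift: homogeneous quadratic components without a common
   factor of positive degree *)
Definition quadratic_lift (F : 'I_n -> {mpoly K[n]}) : Prop :=
  (forall i, F i \is 2.-homog) /\
  (forall (d : {mpoly K[n]}) (Q : 'I_n -> {mpoly K[n]}),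
      (forall i, F i = d * Q i) -> (msize d <= 1)%N).

Definition cubic_form (N : {mpoly K[n]}) : Prop := N \is 3.-homog.

(* Data of a quadro-quadric Cremona transformation f with inverse g:
   quadratic lifts F, G and non-zero cubic forms N, M with
   G(F(x)) = N(x) x and F(G(y)) = M(y) y. *)
Definition quadro_quadric_cremona (F G : 'I_n -> {mpoly K[n]})
    (N M : {mpoly K[n]}) : Prop :=
  [/\ quadratic_lift F /\ quadratic_lift G,
      cubic_form N /\ N != 0, cubic_form M /\ M != 0,
      (forall x : V, evmap G (evmap F x) = ev N x *: x)
    & (forall y : V, evmap F (evmap G y) = ev M y *: y)].

(* j_f = F / N (only meaningful where N does not vanish) *)
Definition jmap (F : 'I_n -> {mpoly K[n]}) (N : {mpoly K[n]}) (x : V) : V :=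
  (ev N x)^-1 *: evmap F x.

(* a property holds for generic x : it holds on a non-empty Zariski open set *)
Definition generic (P : V -> Prop) : Prop :=
  exists Q : {mpoly K[n]}, Q != 0 /\ forall x : V, ev Q x != 0 -> P x.

Definition jmap_translate_in (F : 'I_n -> {mpoly K[n]}) (N : {mpoly K[n]})
    (IF IG : {vspace V}) (x : V) : Prop :=
  ev N x != 0 ->
  forall e : V, e \in IF -> ev N (x + e) != 0 ->
    jmap F N (x + e) - jmap F N x \in IG.

(* (I_f, I_g), given by their affine cones I_F, I_G, is an ideal *)
Definition is_ideal (F G : 'I_n -> {mpoly K[n]}) (N M : {mpoly K[n]})
    (IF IG : {vspace V}) : Prop :=
  generic (jmap_translate_in F N IF IG) /\
  generic (jmap_translate_in G M IG IF).

(* the radical R = V(d^2 N): points where all second partials of N vanish;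
   E is contained in R (as affine cones) *)
Definition in_radical (N : {mpoly K[n]}) (E : {vspace V}) : Prop :=
  forall e : V, e \in E -> forall i j : 'I_n, ev (mderiv i (mderiv j N)) e = 0.

Definition is_radical_ideal (F G : 'I_n -> {mpoly K[n]}) (N M : {mpoly K[n]})
    (IF IG : {vspace V}) : Prop :=
  is_ideal F G N M IF IG /\ in_radical N IF.

Definition in_span (S : V -> Prop) (v : V) : Prop :=
  forall U : {vspace V}, (forall w, S w -> w \in U) -> v \in U.

(* generators of (the affine cone of) df(E_f) *)
Definition dgen (F : 'I_n -> {mpoly K[n]}) (E : {vspace V}) (v : V) : Prop :=
  exists x e : V, e \in E /\
    v = evmap F (x + e) - evmap F x - evmap F e.

Definition d_sub (F : 'I_n -> {mpoly K[n]}) (E E' : {vspace V}) : Prop :=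
  forall v : V, in_span (dgen F E) v -> v \in E'.

End QuadroQuadric.

From HB Require Import structures.
From mathcomp Require Import all_boot all_order all_algebra.
From mathcomp Require Import mpoly.
From mathcomp Require Import ring.
Set Implicit Arguments.
Unset Strict Implicit.
Unset Printing Implicit Defensive.
Import Order.TTheory GRing.Theory.
Local Open Scope ring_scope.

(* For [e] in the radical of the cubic [N], Euler's formula gives
   [N (x + e) = N x], so [j_f (x + e) - j_f x = (F (x + e) - F x) / N x], and
   [F (x + e) - F x = B (x, e) + F e] with [B] the polar form of [F].
   Comparing [e] with [- e] separates the two terms, and [F e = B (e, e) / 2];
   hence the ideal condition at [x] says [B (x, e) \in E_G] for all [e] in
   [E_F].  As [B] is additive in [x] and two nonempty Zariski open sets meet,
   holding at generic [x] is the same as holding at every [x], which is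
   [df(E_f) \subset E_G]. *)

Lemma base_expansion_inj (D k : nat) (a b : 'I_k -> nat) :
  (forall i, a i < D)%N -> (forall i, b i < D)%N ->
  (\sum_(i < k) a i * D ^ i = \sum_(i < k) b i * D ^ i)%N -> a =1 b.
Proof.
elim: k a b => [|k IH] a b ha hb; first by move=> _ [].
have D_gt0 : (0 < D)%N by apply: leq_ltn_trans (ha ord0).
have expansionE (c : 'I_k.+1 -> nat) :
    (\sum_(i < k.+1) c i * D ^ i =
     (\sum_(i < k) c (lift ord0 i) * D ^ i) * D + c ord0)%N.
  rewrite big_ord_recl expn0 muln1 addnC big_distrl /=; congr (_ + _)%N.
  by apply: eq_bigr => i _; rewrite /bump leq0n add1n expnS mulnCA mulnC.
rewrite !expansionE => E.
have a0E : a ord0 = b ord0.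
  by move: (congr1 (modn^~ D) E); rewrite !modnMDl !modn_small.
move=> i; case: (unliftP ord0 i) => [j ->|->] //.
apply: (IH (a \o lift ord0) (b \o lift ord0)) => // [l|l|] /=; rewrite ?ha ?hb //.
by move: (congr1 (divn^~ D) E); rewrite !divnMDl // !divn_small ?addn0.
Qed.

Section Nonvanishing.
Variables (K : closedFieldType) (n : nat).

(* Kronecker substitution x_i = t ^ (D ^ i), with D exceeding every exponent,
   sends distinct monomials of P to distinct powers of t. *)
Lemma ev_neq0_exists (P : {mpoly K[n]}) : P != 0 -> exists x, ev P x != 0.
Proof.
move=> P_neq0; set D := msize P.
pose enc (m : 'X_{1..n}) := (\sum_(i < n) m i * D ^ i)%N.
pose q : {poly K} := \sum_(m <- msupp P) P@_m *: 'X^(enc m).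
have evq t : ev P (\row_i t ^+ (D ^ i)) = q.[t].
  rewrite /ev mevalE /q horner_sum; apply: eq_bigr => m _.
  rewrite hornerZ hornerXn; congr (_ * _).
  under eq_bigr => i _ do rewrite mxE -exprM.
  by rewrite prodrXr; congr (_ ^+ _); apply: eq_bigr => i _; rewrite mulnC.
have exp_lt m i : m \in msupp P -> (m i < D)%N.
  move=> mP; apply: leq_ltn_trans (msize_mdeg_lt mP).
  by rewrite mdegE (bigD1 i) //= leq_addr.
have q_neq0 : q != 0.
  have : msupp P != [::] by rewrite msupp_eq0.
  case E: (msupp P) => [|m0 s] // _.
  have m0P : m0 \in msupp P by rewrite E mem_head.
  apply/eqP => /(congr1 (fun r : {poly K} => r`_(enc m0))).
  rewrite coef0 /q coef_sum (bigD1_seq m0) ?msupp_uniq //= coefZ coefXn eqxx.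
  rewrite mulr1 big1_seq ?addr0 => [P0|m /andP [m_neq mP]].
    by move: m0P; rewrite mcoeff_msupp P0 eqxx.
  rewrite coefZ coefXn; case: eqP => [encE|]; last by rewrite mulr0.
  case/negP: m_neq; apply/eqP/mnmP => i.
  by apply: (base_expansion_inj (a := fun i => m i) (b := fun i => m0 i))
    (esym encE) i => j; apply: exp_lt.
have [t qt] := closed_nonrootP q q_neq0.
by exists (\row_i t ^+ (D ^ i)); rewrite evq.
Qed.

Lemma generic_additive_mem (P : {mpoly K[n]}) (L : 'rV[K]_n -> 'rV[K]_n)
    (U : {vspace 'rV[K]_n}) :
  P != 0 -> (forall x y, L (x + y) = L x + L y) ->
  (forall y, ev P y != 0 -> L y \in U) -> forall x, L x \in U.
Proof.
move=> P_neq0 L_add LU x.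
pose Px := P \mPo [tuple ('X_i + (x 0 i)%:MP : {mpoly K[n]}) | i < n].
have evPx y : ev Px y = ev P (y + x).
  rewrite /ev comp_mpoly_meval; apply: meval_eq => i.
  by rewrite tnth_mktuple mevalD mevalXU mevalC mxE.
have Px_neq0 : Px != 0.
  have [a Pa] := ev_neq0_exists P_neq0.
  by apply: contraNneq Pa => Px0; rewrite -[a](subrK x) -evPx Px0 /ev meval0.
have [y] := ev_neq0_exists (mulf_neq0 P_neq0 Px_neq0).
rewrite /ev mevalM mulf_eq0 negb_or -/(ev P y) -/(ev Px y) evPx => /andP[Py Pyx].
by have := memvB (LU _ Pyx) (LU _ Py); rewrite L_add addrAC subrr add0r.
Qed.

End Nonvanishing.

Section Polar.
Variables (K : fieldType) (n : nat).
Implicit Types (p q : {mpoly K[n]}) (x y e : 'rV[K]_n).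

Definition polar p x e : K := \sum_k x 0 k * ev (mderiv k p) e.

Lemma mderiv_dhomog d i p : p \is d.+1.-homog -> mderiv i p \is d.-homog.
Proof.
move=> /dhomogP hp; apply/dhomogP => m; rewrite mcoeff_msupp mcoeff_mderiv.
have [->|p_neq0] := eqVneq p@_(m + U_(i)) 0; first by rewrite mul0rn eqxx.
move=> _; have := hp (m + U_(i))%MM; rewrite mcoeff_msupp p_neq0 => /(_ isT).
by change (mdeg (m + U_(i))%MM = d.+1 -> mdeg m = d); rewrite mdegD mdeg1 addn1 => -[].
Qed.

Lemma ev_dhomog0 p x y : p \is 0.-homog -> ev p x = ev p y.
Proof.
move=> /dhomogP hp; rewrite /ev !mevalE; apply: eq_big_seq => m /hp md.
have /eqP : mdeg m = 0%N := md; rewrite mdegE sum_nat_eq0 => /forallP m0.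
by congr (_ * _); apply: eq_bigr => i _; rewrite (eqP (implyP (m0 i) isT)) !expr0.
Qed.

Lemma polar_diag_dhomog d p x : p \is d.-homog -> polar p x x = d%:R * ev p x.
Proof.
move=> /dhomogP hp; rewrite /polar /mderiv.
under eq_bigr do rewrite /ev raddf_sum big_distrr /=.
rewrite exchange_big /ev mevalE big_distrr /=; apply: eq_big_seq => m /hp md.
have monomialE i : x 0 i * \prod_j x 0 j ^+ (m - U_(i))%MM j * (m i)%:R
    = (m i)%:R * \prod_j x 0 j ^+ m j.
  case: (posnP (m i)) => [->|mi_gt0]; first by rewrite !mulr0n mulr0 mul0r.
  rewrite mulrC; congr (_ * _); rewrite (bigD1 i) //= [in RHS](bigD1 i) //=.
  rewrite mulrA -exprS mnmBE mnm1E eqxx subn1 prednK //; congr (_ * _).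
  by apply: eq_bigr => j ji; rewrite mnmBE mnm1E eq_sym (negbTE ji) subn0.
rewrite (eq_bigr (fun i => p@_m * ((m i)%:R * \prod_j x 0 j ^+ m j))) => [|i _].
  by rewrite -big_distrr -big_distrl /= -natr_sum -mdegE md mulrCA.
by rewrite mevalZ mevalX -monomialE; ring.
Qed.

Lemma ev_dhomog1 q x : q \is 1.-homog -> ev q x = polar q x 0.
Proof.
move=> hq; rewrite -[ev q x]mul1r -(polar_diag_dhomog x hq); apply: eq_bigr => k _.
by rewrite (ev_dhomog0 x 0 (mderiv_dhomog _ hq)).
Qed.

Lemma polarDl p x y e : polar p (x + y) e = polar p x e + polar p y e.
Proof. by rewrite /polar -big_split; apply: eq_bigr => k _; rewrite mxE mulrDl. Qed.

Lemma polarZl p c x e : polar p (c *: x) e = c * polar p x e.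
Proof. by rewrite /polar big_distrr; apply: eq_bigr => k _; rewrite mxE -mulrA. Qed.

Lemma ev_dhomog1D q x y : q \is 1.-homog -> ev q (x + y) = ev q x + ev q y.
Proof. by move=> hq; rewrite !(ev_dhomog1 _ hq) polarDl. Qed.

Lemma ev_dhomog1Z q c x : q \is 1.-homog -> ev q (c *: x) = c * ev q x.
Proof. by move=> hq; rewrite !(ev_dhomog1 _ hq) polarZl. Qed.

Section Quadratic.
Variables (p : {mpoly K[n]}) (p_quad : p \is 2.-homog).

Let mderiv_linear k : mderiv k p \is 1.-homog := mderiv_dhomog k p_quad.

Lemma polarDr x e e' : polar p x (e + e') = polar p x e + polar p x e'.
Proof.
rewrite /polar -big_split; apply: eq_bigr => k _.
by rewrite ev_dhomog1D // mulrDr.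
Qed.

Lemma polarZr c x e : polar p x (c *: e) = c * polar p x e.
Proof.
rewrite /polar big_distrr; apply: eq_bigr => k _.
by rewrite ev_dhomog1Z // mulrCA.
Qed.

Lemma polarC x e : polar p x e = polar p e x.
Proof.
rewrite /polar.
under eq_bigr => k _ do rewrite ev_dhomog1 // big_distrr.
under [RHS]eq_bigr => k _ do rewrite ev_dhomog1 // big_distrr.
rewrite exchange_big /=; apply: eq_bigr => k _; apply: eq_bigr => i _.
by rewrite mderiv_comm mulrCA.
Qed.

End Quadratic.
End Polar.

Section CharZero.
Variables (K : fieldType) (n : nat).
Hypothesis char0 : [pchar K] =i pred0.
Implicit Types (p : {mpoly K[n]}) (x e : 'rV[K]_n).

Lemma natrS_neq0 k : k.+1%:R != 0 :> K.
Proof. by move/pcharf0P: char0 => ->. Qed.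

Lemma ev_quadD p x e :
  p \is 2.-homog -> ev p (x + e) = ev p x + polar p x e + ev p e.
Proof.
move=> p_quad; apply: (mulfI (natrS_neq0 1)).
rewrite -!(polar_diag_dhomog _ p_quad) polarDl !polarDr // (polarC p_quad e x).
by rewrite !mulrDr -!(polar_diag_dhomog _ p_quad); ring.
Qed.

Lemma ev_quadN p e : p \is 2.-homog -> ev p (- e) = ev p e.
Proof.
move=> p_quad; apply: (mulfI (natrS_neq0 1)).
by rewrite -!(polar_diag_dhomog _ p_quad) -scaleN1r polarZl polarZr // !mulN1r opprK.
Qed.

(* Euler's formula shows that the gradient of [N] is invariant under
   translation by [e] and orthogonal to [e]. *)
Lemma ev_cubicD_hessian0 N x e : N \is 3.-homog ->
  (forall i j, ev (mderiv i (mderiv j N)) e = 0) -> ev N (x + e) = ev N x.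
Proof.
move=> N_cubic hess0.
have grad_quad j : mderiv j N \is 2.-homog := mderiv_dhomog j N_cubic.
have polar_grad0 j y : polar (mderiv j N) y e = 0.
  by rewrite /polar big1 // => k _; rewrite hess0 mulr0.
have gradD j : ev (mderiv j N) (x + e) = ev (mderiv j N) x.
  have grad_e0 : ev (mderiv j N) e = 0.
    apply: (mulfI (natrS_neq0 1)).
    by rewrite mulr0 -(polar_diag_dhomog _ (grad_quad j)) polar_grad0.
  by rewrite ev_quadD // polar_grad0 grad_e0 !addr0.
have polar_e0 : polar N e x = 0.
  apply: (mulfI (natrS_neq0 1)); rewrite mulr0 /polar big_distrr /=.
  under eq_bigr => j _ do rewrite mulrCA -(polar_diag_dhomog _ (grad_quad j)) /polar big_distrr.
  rewrite exchange_big big1 //= => i _.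
  under eq_bigr => j _ do rewrite mulrCA mderiv_comm.
  by rewrite -big_distrr /= -/(polar _ e x) -polarC ?polar_grad0 ?mulr0 // mderiv_dhomog.
have polarD y : polar N y (x + e) = polar N y x.
  by apply: eq_bigr => j _; rewrite gradD.
apply: (mulfI (natrS_neq0 2)).
by rewrite -!(polar_diag_dhomog _ N_cubic) polarDl !polarD polar_e0 addr0.
Qed.

End CharZero.

Section QuadraticMap.
Variables (K : fieldType) (n : nat) (F : 'I_n -> {mpoly K[n]}).
Hypothesis F_quad : forall i, F i \is 2.-homog.
Implicit Types (x y e : 'rV[K]_n) (EF EG : {vspace 'rV[K]_n}).

Definition polar_map x e : 'rV[K]_n := \row_i polar (F i) x e.

Lemma polar_mapDl x y e : polar_map (x + y) e = polar_map x e + polar_map y e.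
Proof. by apply/rowP => i; rewrite !mxE polarDl. Qed.

Lemma polar_mapNr x e : polar_map x (- e) = - polar_map x e.
Proof. by apply/rowP => i; rewrite !mxE -scaleN1r polarZr // mulN1r. Qed.

Hypothesis char0 : [pchar K] =i pred0.

Lemma evmap_quadD x e : evmap F (x + e) = evmap F x + polar_map x e + evmap F e.
Proof. by apply/rowP => i; rewrite !mxE ev_quadD. Qed.

Lemma polar_map_diag e : polar_map e e = 2%:R *: evmap F e.
Proof. by apply/rowP => i; rewrite !mxE (polar_diag_dhomog _ (F_quad i)). Qed.

Lemma evmapN e : evmap F (- e) = evmap F e.
Proof. by apply/rowP => i; rewrite !mxE ev_quadN. Qed.

Lemma evmap_incrementE x e :
  evmap F (x + e) - evmap F x = polar_map x e + evmap F e.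
Proof. by rewrite evmap_quadD [evmap F x + _]addrC addrAC addrK. Qed.

Lemma d_subP EF EG :
  d_sub F EF EG <-> forall x e, e \in EF -> polar_map x e \in EG.
Proof.
have dgenE x e : evmap F (x + e) - evmap F x - evmap F e = polar_map x e.
  by rewrite evmap_incrementE addrK.
split=> [dFG x e eEF | polarEG v].
  by apply: dFG => U; apply; exists x, e; rewrite dgenE.
by apply; move=> _ [x [e [eEF ->]]]; rewrite dgenE polarEG.
Qed.

Lemma polar_map_mem_of_increment EF EG x :
    (forall e, e \in EF -> evmap F (x + e) - evmap F x \in EG) ->
  forall e, e \in EF -> polar_map x e \in EG.
Proof.
move=> incEG e eEF; have eNEF : - e \in EF by rewrite memvN.
have := incEG (- e) eNEF; have := incEG e eEF.
rewrite !evmap_incrementE polar_mapNr evmapN => incE incNE.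
have := memvZ 2%:R^-1 (memvB incE incNE).
rewrite opprD opprK addrACA subrr addr0 -mulr2n -scaler_nat scalerA.
by rewrite mulVf ?natrS_neq0 // scale1r.
Qed.

Lemma evmap_increment_mem EF EG :
    (forall x e, e \in EF -> polar_map x e \in EG) ->
  forall x e, e \in EF -> evmap F (x + e) - evmap F x \in EG.
Proof.
move=> polarEG x e eEF; rewrite evmap_incrementE memvD ?polarEG //.
have := memvZ 2%:R^-1 (polarEG e e eEF).
by rewrite polar_map_diag scalerA mulVf ?natrS_neq0 // scale1r.
Qed.

End QuadraticMap.

Section RadicalTranslation.
Variables (K : fieldType) (n : nat) (F : 'I_n -> {mpoly K[n]}) (N : {mpoly K[n]}).
Variables (EF EG : {vspace 'rV[K]_n}).
Hypotheses (char0 : [pchar K] =i pred0) (F_quad : forall i, F i \is 2.-homog).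
Hypotheses (N_cubic : N \is 3.-homog) (N_radical : in_radical N EF).

Lemma jmap_incrementE x e : e \in EF ->
  jmap F N (x + e) - jmap F N x = (ev N x)^-1 *: (evmap F (x + e) - evmap F x).
Proof.
by move=> eEF; rewrite /jmap (ev_cubicD_hessian0 char0 x N_cubic (N_radical eEF)) scalerBr.
Qed.

Lemma jmap_translate_inP x : jmap_translate_in F N EF EG x <->
  (ev N x != 0 -> forall e, e \in EF -> evmap F (x + e) - evmap F x \in EG).
Proof.
split=> incEG Nx e eEF; last by rewrite jmap_incrementE // memvZ // incEG.
have Nxe : ev N (x + e) != 0.
  by rewrite (ev_cubicD_hessian0 char0 x N_cubic (N_radical eEF)).
have := memvZ (ev N x) (incEG Nx e eEF Nxe).
by rewrite jmap_incrementE // scalerA mulfV // scale1r.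
Qed.

Lemma generic_translate_of_d_sub :
  d_sub F EF EG -> generic (jmap_translate_in F N EF EG).
Proof.
move/(d_subP F_quad char0) => polarEG; exists 1; split=> [|x _]; first exact: oner_neq0.
by apply/jmap_translate_inP => _; apply: evmap_increment_mem.
Qed.

End RadicalTranslation.

Lemma d_sub_of_generic_translate (K : closedFieldType) (n : nat)
    (F : 'I_n -> {mpoly K[n]}) (N : {mpoly K[n]}) (EF EG : {vspace 'rV[K]_n}) :
  [pchar K] =i pred0 -> (forall i, F i \is 2.-homog) ->
  N \is 3.-homog -> N != 0 -> in_radical N EF ->
  generic (jmap_translate_in F N EF EG) -> d_sub F EF EG.
Proof.
move=> char0 F_quad N_cubic N_neq0 N_radical [Q [Q_neq0 QE]].
apply/(d_subP F_quad char0) => x e eEF.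
apply: (generic_additive_mem (P := Q * N) (L := polar_map F ^~ e)) => [|y z|y].
- exact: mulf_neq0.
- exact: polar_mapDl.
rewrite /ev mevalM mulf_eq0 negb_or => /andP[Qy Ny].
apply: (polar_map_mem_of_increment F_quad char0) eEF.
by move/jmap_translate_inP: (QE y Qy); apply.
Qed.

Theorem proposition5p12 (K : closedFieldType) (n : nat)
    (F G : 'I_n -> {mpoly K[n]}) (N M : {mpoly K[n]})
    (EF EG : {vspace 'rV[K]_n}) :
  [pchar K] =i pred0 ->
  quadro_quadric_cremona F G N M ->
  in_radical N EF -> in_radical M EG ->
  (is_radical_ideal F G N M EF EG <-> (d_sub F EF EG /\ d_sub G EG EF)).
Proof.
move=> char0 [[[F_quad _] [G_quad _]] [N_cubic N_neq0] [M_cubic M_neq0] _ _] NEF MEG.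
split=> [[[idealF idealG] _] | [dF dG]].
  split; first exact: (d_sub_of_generic_translate char0 F_quad N_cubic N_neq0 NEF).
  exact: (d_sub_of_generic_translate char0 G_quad M_cubic M_neq0 MEG).
split=> //; split; first exact: (generic_translate_of_d_sub char0 F_quad N_cubic NEF).
exact: (generic_translate_of_d_sub char0 G_quad M_cubic MEG).
Qed.
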